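(* Let $n\ge 2$, let $w(A,B)\in\mathbb F_2=\langle A,B\rangle$ be any word and $m=(m_1,\dots,m_{n-1})$ any tuple of integers. Then $\operatorname{Ker}(\Theta_n^{w,m})\le FVP_n\cap FVK_n$.
   Context: For $n\ge 2$, the flat virtual braid group $FVB_n$ is the group with generators $\sigma_1,\dots,\sigma_{n-1},\rho_1,\dots,\rho_{n-1}$ and defining relations: $\sigma_i^2=1$, $\rho_i^2=1$ for $1\le i\le n-1$; $\sigma_i\sigma_{i+1}\sigma_i=\sigma_{i+1}\sigma_i\sigma_{i+1}$, $\rho_i\rho_{i+1}\rho_i=\rho_{i+1}\rho_i\rho_{i+1}$ and $\rho_i\rho_{i+1}\sigma_i=\sigma_{i+1}\rho_i\rho_{i+1}$ for $1\le i\le n-2$; $\sigma_i\sigma_j=\sigma_j\sigma_i$, $\rho_i\rho_j=\rho_j\rho_i$ and $\rho_i\sigma_j=\sigma_j\rho_i$ for $|i-j|\ge 2$. $\mathbb F_{2n}$ is the free group on $x_1,\dots,x_n,y_1,\dots,y_n$; automorphisms compose left to right, $(\varphi\psi)(f)=\psi(\varphi(f))$, and generators not mentioned in the description of an automorphism are fixed. For $w(A,B)\in\mathbb F_2=\langle A,B\rangle$ and $m\in\mathbb Z^{n-1}$, $\Theta_n^{w,m}\colon FVB_n\to\mathrm{Aut}(\mathbb F_{2n})$ is the homomorphism given by $\Theta_n^{w,m}(\sigma_i): x_i\mapsto x_{i+1}a_i,\ x_{i+1}\mapsto x_i a_i^{-1}$, where $a_i=y_{i+1}^{m_2+\dots+m_i}\,w(y_i,y_{i+1})\,y_i^{-(m_1+\dots+m_{i-1})}$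 (empty sums are $0$, so $a_1=w(y_1,y_2)$); $\Theta_n^{w,m}(\rho_i): x_i\mapsto x_{i+1}y_{i+1}^{m_i},\ x_{i+1}\mapsto x_iy_i^{-m_i},\ y_i\mapsto y_{i+1},\ y_{i+1}\mapsto y_i$. Let $S_n=\langle\sigma_1,\dots,\sigma_{n-1}\rangle\le FVB_n$ and $S_n'=\langle\rho_1,\dots,\rho_{n-1}\rangle\le FVB_n$ (each isomorphic to the symmetric group). $\pi_n\colon FVB_n\to S_n$ is the homomorphism with $\pi_n(\sigma_i)=\pi_n(\rho_i)=\sigma_i$, and $FVP_n=\operatorname{Ker}\pi_n$ (flat virtual pure braid group). $\nu_n\colon FVB_n\to S_n'$ is the homomorphism with $\nu_n(\sigma_i)=1$, $\nu_n(\rho_i)=\rho_i$, and $FVK_n=\operatorname{Ker}\nu_n$ (flat virtual kure braid group). *)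

From HB Require Import structures.
From mathcomp Require Import all_boot all_order all_algebra all_fingroup.
Set Implicit Arguments. Unset Strict Implicit. Unset Printing Implicit Defensive.
Import GRing.Theory Num.Theory.

(* Free group F_{2n} on x_1..x_n, y_1..y_n (0-based indices 'I_n).
   letter: (false, i) = x_{i+1}, (true, i) = y_{i+1}.
   signed letter: (l, false) = l, (l, true) = l^{-1}.
   Elements of F_{2n} are represented by words; [reduce] computes the
   freely reduced normal form. *)
Section FVB.
Variable n : nat.

Definition letter := (bool * 'I_n)%type.
Definition sletter := (letter * bool)%type.
Definition fword := seq sletter.

Definition sinv (a : sletter) : sletter := (a.1, ~~ a.2).
Definition cons_red (a : sletter) (r : fword) : fword :=
  if r is b :: r' then (if b == sinv a then r' else a :: r) else [:: a].
Definition reduce (s : fword) : fword := foldr cons_red [::] s.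
Definition winv (s : fword) : fword := rev (map sinv s).
Definition gen (l : letter) : fword := [:: (l, false)].
Definition ypow (i : 'I_n) (k : int) : fword := nseq (absz k) ((true, i), (k < 0)%R).

Definition endo := letter -> fword.
Definition apply_endo (e : endo) (s : fword) : fword :=
  reduce (flatten (map (fun a : sletter => if a.2 then winv (e a.1) else e a.1) s)).

(* a word w(A,B) in F_2 = <A,B>: (false,_) = A, (true,_) = B; second
   component true = inverse *)
Definition subst2 (w : seq (bool * bool)) (a b : letter) : fword :=
  map (fun c : bool * bool => ((if c.1 then b else a), c.2)) w.

(* the generators sigma_i, rho_i (1 <= i <= n-1) are indexed by j : 'I_n.-1,
   with i = j+1; lo j = index of x_i / y_i, hi j = index of x_{i+1} / y_{i+1} *)
Lemma lo_lt (j : 'I_n.-1) : (j < n)%N.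
Proof. case: j => j /= hj; case: n hj => //= n' hj; exact: ltnW. Qed.
Lemma hi_lt (j : 'I_n.-1) : (j.+1 < n)%N.
Proof. case: j => j /= hj; case: n hj => //= n' hj. Qed.
Definition lo (j : 'I_n.-1) : 'I_n := Ordinal (lo_lt j).
Definition hi (j : 'I_n.-1) : 'I_n := Ordinal (hi_lt j).

Variables (w : seq (bool * bool)) (m : seq int).
(* m = (m_1, ..., m_{n-1}) with m_k = m`_(k-1) *)

Definition a_elt (j : 'I_n.-1) : fword :=
  let S1 := (\sum_(1 <= k < j.+1) m`_k)%R in      (* m_2 + ... + m_i *)
  let S2 := (\sum_(0 <= k < j) m`_k)%R in         (* m_1 + ... + m_{i-1} *)
  ypow (hi j) S1 ++ subst2 w (true, lo j) (true, hi j) ++ ypow (lo j) (- S2)%R.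

Definition Theta_sigma (j : 'I_n.-1) : endo := fun l =>
  if l == (false, lo j) then gen (false, hi j) ++ a_elt j
  else if l == (false, hi j) then gen (false, lo j) ++ winv (a_elt j)
  else gen l.

Definition Theta_rho (j : 'I_n.-1) : endo := fun l =>
  if l == (false, lo j) then gen (false, hi j) ++ ypow (hi j) m`_j
  else if l == (false, hi j) then gen (false, lo j) ++ ypow (lo j) (- m`_j)%R
  else if l == (true, lo j) then gen (true, hi j)
  else if l == (true, hi j) then gen (true, lo j)
  else gen l.

(* generators of FVB_n: (false, j) = sigma_{j+1}, (true, j) = rho_{j+1}.
   Since all generators are involutions, every element of FVB_n is a
   positive word in the generators. *)
Definition fvb_gen := (bool * 'I_n.-1)%type.

Definition Theta_gen (g : fvb_gen) : endo :=
  if g.1 then Theta_rho g.2 else Theta_sigma g.2.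

(* Theta(g_1 ... g_k), composed left to right: (phi psi)(f) = psi(phi(f)) *)
Definition Theta_act (u : seq fvb_gen) (f : fword) : fword :=
  foldl (fun f g => apply_endo (Theta_gen g) f) f u.

Definition in_ker_Theta (u : seq fvb_gen) : Prop :=
  forall l : letter, Theta_act u (gen l) = gen l.

Definition pi_n (u : seq fvb_gen) : {perm 'I_n} :=
  (\prod_(g <- u) tperm (lo g.2) (hi g.2))%g.
Definition nu_n (u : seq fvb_gen) : {perm 'I_n} :=
  (\prod_(g <- u) (if g.1 then tperm (lo g.2) (hi g.2) else 1))%g.

End FVB.

From mathcomp Require Import all_boot all_order all_algebra all_fingroup.
Set Implicit Arguments. Unset Strict Implicit.

(* Let Y be the subgroup of F_{2n} generated by y_1, ..., y_n.
   Every generator g of FVB_n acts on F_{2n} by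
     x_k |-> x_{pi(g) k} * (element of Y),     y_i |-> y_{nu(g) i},
   where pi(g) is the transposition (i, i+1) and nu(g) is that transposition
   for rho_i and the identity for sigma_i.  Since a freely reduced word
   x_k * v with v in Y keeps x_k as its first letter, induction on the word
   u in the generators shows that Theta(u) sends x_k to a reduced word
   starting with x_{pi_n(u) k} and y_i to y_{nu_n(u) i}.  If Theta(u) is the
   identity, comparing first letters gives pi_n(u) k = k and
   nu_n(u) i = i for all k, i, i.e. u lies in FVP_n and in FVK_n. *)

Section YWords.
Variable n : nat.

Definition y_word (s : fword n) : bool := all (fun a : sletter n => a.1.1) s.

Lemma y_word_cat (s t : fword n) : y_word s -> y_word t -> y_word (s ++ t).
Proof. by rewrite /y_word all_cat => -> ->. Qed.

Lemma y_word_winv (s : fword n) : y_word s -> y_word (winv s).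
Proof. by rewrite /y_word /winv all_rev all_map; apply: sub_all. Qed.

Lemma y_word_ypow (i : 'I_n) (k : int) : y_word (ypow i k).
Proof. by apply/allP => a /nseqP[-> _]. Qed.

Lemma y_word_subst2 (w : seq (bool * bool)) (i j : 'I_n) :
  y_word (subst2 w (true, i) (true, j)).
Proof. by rewrite /y_word /subst2 all_map; apply/allP => c _ /=; case: ifP. Qed.

(* Free reduction only deletes letters, so it preserves y-words. *)
Lemma y_word_reduce (s : fword n) : y_word s -> y_word (reduce s).
Proof.
elim: s => //= a s IH /andP[ya ys]; rewrite /cons_red.
case: (reduce s) (IH ys) => [|b r] /=; first by rewrite ya.
by case/andP=> yb yr; case: ifP => //= _; rewrite ya yb yr.
Qed.

Lemma reduce_x_cons (k : 'I_n) (s : fword n) : y_word s ->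
  reduce (((false, k), false) :: s) = ((false, k), false) :: reduce s.
Proof.
move=> ys /=; rewrite /cons_red.
case: (reduce s) (y_word_reduce ys) => [|b r] //= /andP[yb _].
by case: ifP => // /eqP eq_b; rewrite eq_b in yb.
Qed.

End YWords.

Section EndoShapes.
Variable n : nat.
Implicit Types (e : endo n) (p q : {perm 'I_n}).

Definition x_shifting e p : Prop :=
  forall k, exists2 Y, y_word Y & e (false, k) = ((false, p k), false) :: Y.

Definition y_permuting e q : Prop := forall i, e (true, i) = gen (true, q i).

Local Notation expand e s :=
  (flatten (map (fun a : sletter n => if a.2 then winv (e a.1) else e a.1) s)).

Lemma y_word_expand e q (Y : fword n) :
  y_permuting e q -> y_word Y -> y_word (expand e Y).
Proof.
move=> ey; elim: Y => //= a Y IH /andP[ya yY]; apply: y_word_cat (IH yY).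
by case: a ya => [[[] i] []] //= _; rewrite ey.
Qed.

(* The invariant propagated along the induction: an endomorphism of the
   above shape sends x_k * (y-word) to x_{p k} * (y-word). *)
Lemma apply_endo_x_cons e p q (k : 'I_n) (Y : fword n) :
  x_shifting e p -> y_permuting e q -> y_word Y ->
  exists2 Z, y_word Z &
    apply_endo e (((false, k), false) :: Y) = ((false, p k), false) :: Z.
Proof.
move=> ex ey yY; have [Y' yY' ek] := ex k.
have yrest : y_word (Y' ++ expand e Y).
  exact: y_word_cat yY' (y_word_expand ey yY).
exists (reduce (Y' ++ expand e Y)); first exact: y_word_reduce.
by rewrite /apply_endo /= ek -reduce_x_cons.
Qed.

Lemma apply_endo_y e q (i : 'I_n) :
  y_permuting e q -> apply_endo e (gen (true, i)) = gen (true, q i).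
Proof. by move=> ey; rewrite /apply_endo /= ey. Qed.

End EndoShapes.

Section ThetaGenerators.
Variables (n : nat) (w : seq (bool * bool)) (m : seq int).

Definition pi_gen (g : fvb_gen n) : {perm 'I_n} := tperm (lo g.2) (hi g.2).
Definition nu_gen (g : fvb_gen n) : {perm 'I_n} := if g.1 then pi_gen g else 1%g.

Lemma y_word_a_elt (j : 'I_n.-1) : y_word (a_elt w m j).
Proof.
rewrite /a_elt; apply: y_word_cat (y_word_ypow _ _) _.
exact: y_word_cat (y_word_subst2 _ _ _) (y_word_ypow _ _).
Qed.

Lemma tperm_off (j : 'I_n.-1) (k : 'I_n) :
  k != lo j -> k != hi j -> tperm (lo j) (hi j) k = k.
Proof. by move=> klo khi; rewrite tpermD // eq_sym. Qed.

Lemma Theta_gen_x_shifting (g : fvb_gen n) :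
  x_shifting (Theta_gen w m g) (pi_gen g).
Proof.
case: g => [[] j] k; rewrite /Theta_gen /Theta_rho /Theta_sigma /pi_gen /=;
  rewrite !xpair_eqE /=.
- case: eqP => [->|klo]; first by exists (ypow (hi j) m`_j); rewrite ?tpermL ?y_word_ypow.
  case: eqP => [->|khi]; first by exists (ypow (lo j) (- m`_j)%R); rewrite ?tpermR ?y_word_ypow.
  by exists [::]; rewrite // tperm_off //; apply/eqP.
- case: eqP => [->|klo]; first by exists (a_elt w m j); rewrite ?tpermL ?y_word_a_elt.
  case: eqP => [->|khi].
    by exists (winv (a_elt w m j)); rewrite ?tpermR ?y_word_winv ?y_word_a_elt.
  by exists [::]; rewrite // tperm_off //; apply/eqP.
Qed.

Lemma Theta_gen_y_permuting (g : fvb_gen n) :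
  y_permuting (Theta_gen w m g) (nu_gen g).
Proof.
case: g => [[] j] i; rewrite /Theta_gen /Theta_rho /Theta_sigma /nu_gen /pi_gen /=.
- rewrite !xpair_eqE /=.
  case: eqP => [->|ilo]; first by rewrite tpermL.
  case: eqP => [->|ihi]; first by rewrite tpermR.
  by rewrite tperm_off //; apply/eqP.
- by rewrite perm1.
Qed.

Lemma Theta_act_x (u : seq (fvb_gen n)) (k : 'I_n) (Y : fword n) : y_word Y ->
  exists2 Z, y_word Z &
    Theta_act w m u (((false, k), false) :: Y) = ((false, pi_n u k), false) :: Z.
Proof.
elim: u k Y => [|g u IH] k Y yY; first by exists Y; rewrite // /pi_n big_nil perm1.
rewrite [Theta_act _ _ _ _]/=.
have [Y' yY' ->] :=
  apply_endo_x_cons k (Theta_gen_x_shifting g) (Theta_gen_y_permuting g) yY.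
have [Z yZ ->] := IH (pi_gen g k) Y' yY'.
by exists Z; rewrite // /pi_n big_cons permM.
Qed.

Lemma Theta_act_y (u : seq (fvb_gen n)) (i : 'I_n) :
  Theta_act w m u (gen (true, i)) = gen (true, nu_n u i).
Proof.
elim: u i => [|g u IH] i; first by rewrite /nu_n big_nil perm1.
rewrite /= (apply_endo_y _ (Theta_gen_y_permuting g)) IH.
by rewrite /nu_n big_cons permM.
Qed.

End ThetaGenerators.

Theorem lemma3p1 (n : nat) (hn : (2 <= n)%N) (w : seq (bool * bool))
  (m : seq int) (hm : size m = n.-1) (u : seq (fvb_gen n)) :
  in_ker_Theta w m u -> pi_n u = 1%g /\ nu_n u = 1%g.
Proof.
move=> ker_u; split; apply/permP => i; rewrite perm1.
- have [Z _ x_image] := Theta_act_x w m u i (isT : y_word [::]).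
  by move: (ker_u (false, i)); rewrite /gen x_image => -[].
- by move: (ker_u (true, i)); rewrite Theta_act_y => -[].
Qed.
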